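(* Let $q$ be a prime and let $C\subseteq GF(q)^n$ be an affine subspace (affine code) such that $C\subseteq\mathcal{A}_{i_1}\cup\dots\cup\mathcal{A}_{i_k}$ for some weights $i_1,\dots,i_k$. Then $|C|\le q^n/L(n,q,i_1,\dots,i_k)$.
   Context: The weight ${\rm wt}(x)$ of $x\in GF(q)^n$ is the number of nonzero coordinates, and $\mathcal{A}_i=\{x\in GF(q)^n:{\rm wt}(x)=i\}$. For $f:GF(q)^n\to\mathbb{C}$ the Fourier transform is $\widehat{f}(z)=q^{-n/2}\sum_{x}f(x)\,\omega^{(x,z)}$ with $\omega=e^{2\pi i/q}$ and $(x,z)=\sum_i x_iz_i$ (computed in $\mathbb{Z}_q$). The support of a function is the set of arguments where it is nonzero. $L(n,q,i_1,\dots,i_k)$ is the minimum of $|{\rm supp}(f)|$ over all functions $f:GF(q)^n\to\mathbb{C}$, not identically zero, with ${\rm supp}(\widehat{f})\subseteq\mathcal{A}_{i_1}\cup\dots\cup\mathcal{A}_{i_k}$. *)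

From HB Require Import structures.
From mathcomp Require Import all_boot all_order all_algebra.
From mathcomp Require Import boolp reals trigo.
From mathcomp Require Import complex.
Set Implicit Arguments. Unset Strict Implicit. Unset Printing Implicit Defensive.
Import Order.TTheory GRing.Theory Num.Theory.
Local Open Scope ring_scope.
Local Open Scope complex_scope.

Section Defs.
Variables (R : realType) (q n : nat).

Definition vec := 'rV['F_q]_n.

Definition wt (x : vec) : nat := #|[set i : 'I_n | x ord0 i != 0]|.

Definition Aset (i : nat) : {set vec} := [set x : vec | wt x == i].

Definition Aunion (I : seq nat) : {set vec} := [set x : vec | wt x \in I].

Definition dotq (x z : vec) : 'F_q := \sum_(i < n) x ord0 i * z ord0 i.

Definition omega : R[i] :=
  cos (2 * pi / q%:R) +i* sin (2 * pi / q%:R).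

Definition fourier (f : vec -> R[i]) (z : vec) : R[i] :=
  ((Num.sqrt (q%:R : R)) ^- n)%:C *
    \sum_(x : vec) f x * omega ^+ (nat_of_ord (dotq x z)).

Definition supp (f : vec -> R[i]) : {set vec} := [set x | f x != 0].

Definition admissible (I : seq nat) (f : vec -> R[i]) : Prop :=
  (exists x, f x != 0) /\ supp (fourier f) \subset Aunion I.

Definition L_pred (I : seq nat) : pred nat :=
  fun m => `[< exists f, admissible I f /\ #|supp f| = m >].

(* L(n,q,i_1,...,i_k): the minimum of |supp f| over admissible f
   (set to 0 if no admissible f exists, a degenerate case) *)
Definition L (I : seq nat) : nat :=
  match pselect (exists m, L_pred I m) with
  | left h => ex_minn h
  | right _ => 0%N
  end.

Definition affine_subspace (C : {set vec}) : Prop :=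
  exists (a : vec) (V : {vspace vec}), C = [set a + v | v in V].

End Defs.

(* Write C = a + W.  The function f(x) = sum_(c in C) omega^(-(x,c)) is, up
   to scaling, the inverse Fourier transform of the indicator of C, so by
   orthogonality of characters its Fourier transform is supported on C and f
   is admissible.  Factoring out omega^(-(x,a)) shows that f(x) is
   omega^(-(x,a)) |W| or 0 according as x lies in the dual code W^perp or
   not, so |supp f| = |W^perp|.  Counting sum_x sum_(v in W) omega^(-(x,v))
   along rows and along columns gives |W^perp| |W| = q^n, hence
   L <= q^n / |C|. *)
From HB Require Import structures.
From mathcomp Require Import all_boot all_order all_algebra.
From mathcomp Require Import boolp reals trigo.
From mathcomp Require Import complex.
From mathcomp Require Import ring.
Set Implicit Arguments.
Unset Strict Implicit.
Unset Printing Implicit Defensive.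
Import Order.TTheory GRing.Theory Num.Theory.
Local Open Scope ring_scope.

Section RootOfUnity.
Local Open Scope complex_scope.
Variable R : realType.

Lemma de_moivre (x : R) t :
  (cos x +i* sin x) ^+ t = cos (t%:R * x) +i* sin (t%:R * x).
Proof.
elim: t => [|t IHt]; first by rewrite expr0 mul0r cos0 sin0.
rewrite exprS IHt /= -natr1 mulrDl mul1r addrC cosD sinD.
by congr (_ +i* _); ring.
Qed.

Variable q : nat.
Hypothesis q_prime : prime q.

Lemma omega_prim_root : q.-primitive_root (omega R q).
Proof.
have q_gt1 : (1 < q)%N by rewrite prime_gt1.
have q_gt0 : (0 : R) < q%:R by rewrite ltr0n ltnW.
have omega_q : omega R q ^+ q = 1.
  rewrite de_moivre (_ : _ * _ = pi *+ 2) ?cos2pi ?sin2pi //.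
  by rewrite -mulr_natl; field; rewrite lt0r_neq0.
have omega_neq1 : omega R q != 1.
  apply/negP => /eqP -[/esym cos_eq1 _].
  have angle_in : (2 * pi / q%:R : R) \in `[0, pi].
    rewrite in_itv /= divr_ge0 ?mulr_ge0 ?pi_ge0 //= ler_pdivrMr //.
    by rewrite [2 * _]mulrC ler_pM2l ?pi_gt0 // ler_nat.
  suff : (2 * pi / q%:R : R) = 0.
    by move/eqP; rewrite gt_eqF // divr_gt0 ?mulr_gt0 ?pi_gt0.
  by apply: cos_inj; rewrite ?cos0 // in_itv /= lexx pi_ge0.
have [m prim_m m_dvd_q] := prim_order_exists (prime_gt0 q_prime) omega_q.
case/primeP: q_prime => _ /(_ m m_dvd_q) /pred2P[m1 | m_q].
  by move: omega_neq1; rewrite -(prim_expr_order prim_m) m1 expr1 eqxx.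
by rewrite m_q in prim_m.
Qed.
End RootOfUnity.

Section DotProduct.
Variables (q n : nat).
Local Notation V := (vec q n).

Lemma dotqDl (x y z : V) : dotq (x + y) z = dotq x z + dotq y z.
Proof.
by rewrite /dotq -big_split; apply: eq_bigr => i _; rewrite mxE mulrDl.
Qed.

Lemma dotqDr (x y z : V) : dotq x (y + z) = dotq x y + dotq x z.
Proof.
by rewrite /dotq -big_split; apply: eq_bigr => i _; rewrite mxE mulrDr.
Qed.

Lemma dotqNr (x y : V) : dotq x (- y) = - dotq x y.
Proof. by rewrite /dotq -sumrN; apply: eq_bigr => i _; rewrite mxE mulrN. Qed.

Lemma dotq0l (y : V) : dotq 0 y = 0.
Proof. by rewrite /dotq big1 // => i _; rewrite mxE mul0r. Qed.

Lemma dotq0r (x : V) : dotq x 0 = 0.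
Proof. by rewrite /dotq big1 // => i _; rewrite mxE mulr0. Qed.

Lemma dotq_nondegenerate (y : V) : [forall x, dotq x y == 0] = (y == 0).
Proof.
apply/forallP/eqP => [dot0 | ->]; last by move=> x; rewrite dotq0r.
apply/rowP => i; move/eqP: (dot0 (delta_mx 0 i)); rewrite /dotq (bigD1 i) //=.
rewrite big1 ?addr0 => [|j ji]; last by rewrite !mxE (negbTE ji) andbF mul0r.
by rewrite !mxE !eqxx mul1r.
Qed.

Definition dual (W : {vspace V}) : {set V} :=
  [set x | [forall v in W, dotq x v == 0]].

Lemma mem0_dual (W : {vspace V}) : 0 \in dual W.
Proof. by rewrite inE; apply/forall_inP => v _; rewrite dotq0l. Qed.

End DotProduct.

Section AdditiveCharacter.
Variables (R : realType) (q : nat).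
Hypothesis q_prime : prime q.
Let omega_prim := omega_prim_root R q_prime.

Definition addchar (a : 'F_q) : R[i] := omega R q ^+ a.

Lemma addcharD a b : addchar (a + b) = addchar a * addchar b.
Proof.
rewrite /addchar -exprD -(prim_expr_mod omega_prim (a + b)); congr (_ ^+ _).
exact: (congr1 (modn _) (Fp_cast q_prime)).
Qed.

Lemma addchar_eq1 a : (addchar a == 1) = (a == 0).
Proof.
rewrite /addchar -(expr0 (omega R q)) (eq_prim_root_expr omega_prim).
by rewrite mod0n modn_small // -[in X in (_ < X)%N](Fp_cast q_prime).
Qed.

Lemma addchar_neq0 a : addchar a != 0.
Proof.
by rewrite expf_neq0 // (prim_root_eq0 omega_prim) gtn_eqF ?prime_gt0.
Qed.

Lemma sum_addchar (V : finZmodType) (S : {pred V}) (phi : V -> 'F_q) :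
    {morph phi : u v / u + v} -> {in S &, forall u v, u - v \in S} ->
  \sum_(v in S) addchar (phi v) =
    if [forall v in S, phi v == 0] then #|S|%:R else 0.
Proof.
move=> phiD S_sub.
case: ifP => [/forall_inP phi0 | /negbT/forall_inPn[v0 v0S phiv0]].
  rewrite (eq_bigr (fun=> 1)) ?sumr_const // => v /phi0/eqP ->.
  by rewrite /addchar expr0.
have S_shift v : (v + v0 \in S) = (v \in S).
  have S_Nv0 : - v0 \in S by rewrite -sub0r S_sub // -(subrr v0) S_sub.
  apply/idP/idP => [vv0S | vS]; first by rewrite -(addrK v0 v) S_sub.
  by rewrite -(opprK v0) S_sub.
set s := \sum_(v in S) _.
have s_shift : s = s * addchar (phi v0).
  rewrite {1}/s (reindex_inj (addIr v0)) /= (eq_bigl _ _ S_shift) mulr_suml.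
  by apply: eq_bigr => v _; rewrite phiD addcharD.
apply/eqP; move/eqP: s_shift; rewrite -subr_eq0 -{1}(mulr1 s) -mulrBr mulf_eq0.
by rewrite subr_eq0 (eq_sym 1) addchar_eq1 (negbTE phiv0) orbF.
Qed.

Section Code.
Variable n : nat.
Local Notation V := (vec q n).

Lemma sum_addchar_dotq (y : V) :
  \sum_(x : V) addchar (dotq x y) = if y == 0 then (q ^ n)%:R else 0.
Proof.
rewrite (@sum_addchar V predT (fun x => dotq x y)).
- rewrite -dotq_nondegenerate card_mx card_Fp // mul1n.
  by congr (if _ then _ else _); apply: eq_forallb => x.
- by move=> u v; rewrite dotqDl.
- by [].
Qed.

(* q^(n/2) times the inverse Fourier transform of the indicator of C *)
Definition inv_fourier_ind (C : {set V}) (x : V) : R[i] :=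
  \sum_(c in C) addchar (dotq x (- c)).

Lemma supp_fourier_inv_ind (C : {set V}) :
  supp (fourier (inv_fourier_ind C)) \subset C.
Proof.
apply/subsetP => z; rewrite inE; apply: contraNT => zNC.
rewrite /fourier /inv_fourier_ind.
under eq_bigr do rewrite mulr_suml.
rewrite exchange_big big1 ?mulr0 //= => c cC.
rewrite (eq_bigr (fun x => addchar (dotq x (z - c)))) => [|x _]; last first.
  by rewrite addrC dotqDr addcharD.
rewrite sum_addchar_dotq subr_eq0; case: eqP => // zc.
by move: zNC; rewrite zc cC.
Qed.

Variable W : {vspace V}.

Lemma sum_addchar_dual x :
  \sum_(v in W) addchar (dotq x (- v)) = if x \in dual W then #|W|%:R else 0.
Proof.
rewrite (@sum_addchar V W (fun v => dotq x (- v))).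
- rewrite inE; congr (if _ then _ else _).
  by apply: eq_forallb_in => v _; rewrite dotqNr oppr_eq0.
- by move=> u v; rewrite opprD dotqDr.
- by move=> u v; apply: memvB.
Qed.

(* R only hosts the character sums used in the proof. *)
Lemma card_dual_mul : (#|dual W| * #|W| = q ^ n)%N.
Proof.
pose S := \sum_(x : V) \sum_(v in W) addchar (dotq x (- v)).
have row_sums : S = (#|dual W| * #|W|)%:R.
  rewrite /S; under eq_bigr do rewrite sum_addchar_dual.
  by rewrite -big_mkcond sumr_const mulnC natrM mulr_natr.
have col_sums : S = (q ^ n)%:R.
  rewrite /S exchange_big /= (bigD1 0) ?mem0v //= oppr0 sum_addchar_dotq eqxx.
  rewrite big1 ?addr0 // => v /andP[_ v_neq0].
  by rewrite sum_addchar_dotq oppr_eq0 (negbTE v_neq0).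
by apply/eqP; rewrite -(eqr_nat R[i]) -row_sums col_sums.
Qed.

Variable a : V.

Lemma inv_fourier_ind_affine x :
  inv_fourier_ind [set a + v | v in W] x =
    addchar (dotq x (- a)) * if x \in dual W then #|W|%:R else 0.
Proof.
rewrite /inv_fourier_ind big_imset /=; last by move=> u v _ _; apply: addrI.
under eq_bigr => v _ do rewrite opprD dotqDr addcharD.
by rewrite -mulr_sumr sum_addchar_dual.
Qed.

Lemma supp_inv_fourier_ind_affine :
  supp (inv_fourier_ind [set a + v | v in W]) = dual W.
Proof.
apply/setP => x; rewrite [in LHS]inE inv_fourier_ind_affine.
rewrite mulf_eq0 negb_or addchar_neq0 /=.
case: ifP => _; rewrite ?eqxx // pnatr_eq0 -lt0n.
by apply/card_gt0P; exists 0; apply: mem0v.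
Qed.

End Code.
End AdditiveCharacter.

Lemma admissible_L_bounds (R : realType) q n (I : seq nat)
    (f : vec q n -> R[i]) :
  admissible I f -> (0 < L R q n I <= #|supp f|)%N.
Proof.
move=> f_adm; have L_supp : L_pred R q n I #|supp f| by apply/asboolP; exists f.
rewrite /L; case: pselect => [? | []]; last by exists #|supp f|.
case: ex_minnP => m /asboolP[g [[[x gx_neq0] _] <-]] m_min.
by rewrite m_min // andbT card_gt0; apply/set0Pn; exists x; rewrite inE.
Qed.

Theorem corollary4 (R : realType) (q n : nat) (I : seq nat)
  (C : {set vec q n}) :
  prime q -> affine_subspace C -> C \subset Aunion q n I ->
  (#|C|%:R : R) <= (q ^ n)%:R / (@L R q n I)%:R.
Proof.
move=> q_prime [a [W ->]] C_sub.
set f := inv_fourier_ind R [set a + v | v in W].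
have supp_f : supp f = dual W := supp_inv_fourier_ind_affine R q_prime W a.
have f_adm : admissible I f.
  split; last exact: subset_trans (supp_fourier_inv_ind R q_prime _) C_sub.
  by exists 0; have := mem0_dual W; rewrite -supp_f inE.
have /andP[L_gt0] := admissible_L_bounds f_adm; rewrite supp_f => L_le.
rewrite ler_pdivlMr ?ltr0n // -natrM ler_nat card_imset; last exact: addrI.
by rewrite -(card_dual_mul R q_prime W) mulnC leq_mul2r L_le orbT.
Qed.
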